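(* For every pair $(R,S)\in\{(R_1,R_4),(R_1,R_5),(R_2,R_4),(R_2,R_5),(R_3,R_5),(R_5,R_2),(R_5,R_3)\}$ we have $\mathsf{AP}(R,S)=\mathsf{C}$.
   Context: Tuples in $\{0,1\}^4$ are written as strings $abcd$. The relations $R_1,\dots,R_5\subseteq\{0,1\}^4$ are $R_1=\{0000,1000,0100,1100,1010,0110,1001,0101,0011,1011,0111,1111\}$, $R_2=\{0000,1000,0100,1100,1010,0101,0011,1111\}$, $R_3=\{0000,1100,1010,0101,0011,1011,0111,1111\}$, $R_4=\{0000,1100,1010,0101,0011,1111\}$, $R_5=\{0000,1100,1010,0110,1001,0101,0011,1111\}$. For $R,S\subseteq\{0,1\}^4$, a Boolean function $f\colon\{0,1\}^n\to\{0,1\}$ is analogy-preserving relative to $(R,S)$ if for all $\mathbf{a},\mathbf{b},\mathbf{c},\mathbf{d}\in\{0,1\}^n$ with $(a_i,b_i,c_i,d_i)\in R$ for every $i$ and such that $(f(\mathbf{a}),f(\mathbf{b}),f(\mathbf{c}),x)\in S$ for some $x\in\{0,1\}$, we have $(f(\mathbf{a}),f(\mathbf{b}),f(\mathbf{c}),f(\mathbf{d}))\in S$; $\mathsf{AP}(R,S)$ is the set of all such functions of all arities. $\mathsf{C}$ is the set of all constant Boolean functions (of all arities). *)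

From mathcomp Require Import all_boot.
Set Implicit Arguments. Unset Strict Implicit. Unset Printing Implicit Defensive.

(* A 4-tuple abcd in {0,1}^4, with 0 = false and 1 = true. *)
Definition quad := (bool * bool * bool * bool)%type.
Definition rel4 := seq quad.

Definition R1 : rel4 :=
  [:: (false, false, false, false);
      (true, false, false, false);
      (false, true, false, false);
      (true, true, false, false);
      (true, false, true, false);
      (false, true, true, false);
      (true, false, false, true);
      (false, true, false, true);
      (false, false, true, true);
      (true, false, true, true);
      (false, true, true, true);
      (true, true, true, true)].

Definition R2 : rel4 :=
  [:: (false, false, false, false);
      (true, false, false, false);
      (false, true, false, false);
      (true, true, false, false);
      (true, false, true, false);
      (false, true, false, true);
      (false, false, true, true);
      (true, true, true, true)].

Definition R3 : rel4 :=
  [:: (false, false, false, false);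
      (true, true, false, false);
      (true, false, true, false);
      (false, true, false, true);
      (false, false, true, true);
      (true, false, true, true);
      (false, true, true, true);
      (true, true, true, true)].

Definition R4 : rel4 :=
  [:: (false, false, false, false);
      (true, true, false, false);
      (true, false, true, false);
      (false, true, false, true);
      (false, false, true, true);
      (true, true, true, true)].

Definition R5 : rel4 :=
  [:: (false, false, false, false);
      (true, true, false, false);
      (true, false, true, false);
      (false, true, true, false);
      (true, false, false, true);
      (false, true, false, true);
      (false, false, true, true);
      (true, true, true, true)].

Definition boolfun (n : nat) := n.-tuple bool -> bool.

Definition analogy_preserving (R S : rel4) (n : nat) (f : boolfun n) : Prop :=
  forall a b c d : n.-tuple bool,
    (forall i : 'I_n, (tnth a i, tnth b i, tnth c i, tnth d i) \in R) ->
    (exists x : bool, (f a, f b, f c, x) \in S) ->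
    (f a, f b, f c, f d) \in S.

Definition AP (R S : rel4) : forall n, boolfun n -> Prop :=
  fun n f => analogy_preserving R S f.

Definition Cst : forall n, boolfun n -> Prop :=
  fun n f => exists c : bool, forall x, f x = c.

From mathcomp Require Import all_boot.
Set Implicit Arguments. Unset Strict Implicit. Unset Printing Implicit Defensive.

(* Constants preserve every analogy because 0000 and 1111 lie in each S.
   Conversely, suppose f x <> f 0. Apply analogy preservation to tuples built
   from x and the constant tuples 0, 1 whose i-th column is a fixed pattern in
   x_i (0b00, b011 or abba), all of whose instances lie in R: the values of f
   form an equation a : b :: c : d that is solvable in S but for which d is
   not a solution. *)

Definition consistent (S : rel4) (a b c d : bool) : bool :=
  ((a, b, c, false) \in S) || ((a, b, c, true) \in S) ==> ((a, b, c, d) \in S).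

Lemma AP_consistent R S n (f : boolfun n) :
  AP R S f ->
  forall a b c d : n.-tuple bool,
    (forall i, (tnth a i, tnth b i, tnth c i, tnth d i) \in R) ->
    consistent S (f a) (f b) (f c) (f d).
Proof.
move=> ap a b c d cols; apply/implyP => solvable.
by apply: (ap a b c d cols); case/orP: solvable; [exists false | exists true].
Qed.

Lemma Cst_AP R S n (f : boolfun n) :
  (false, false, false, false) \in S -> (true, true, true, true) \in S ->
  Cst f -> AP R S f.
Proof. by move=> S0 S1 [[] fv] a b c d _ _; rewrite !fv. Qed.

Section ConstantFromColumns.

Variables (R S : rel4) (n : nat) (f : boolfun n).
Hypothesis ap : AP R S f.

Let z0 : n.-tuple bool := [tuple false | _ < n].
Let z1 : n.-tuple bool := [tuple true | _ < n].

Lemma AP_Cst_0b00 :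
  (forall b, (false, b, false, false) \in R) ->
  (forall a b, consistent S a b a a -> a = b) ->
  Cst f.
Proof.
move=> R_0b00 S_sep; exists (f z0) => x; apply/esym/S_sep.
by apply: AP_consistent ap _ _ _ _ _ => i; rewrite tnth_mktuple.
Qed.

Lemma AP_Cst_b011 :
  (forall b, (b, false, true, true) \in R) ->
  (forall a b c, consistent S a b c c -> a = b) ->
  Cst f.
Proof.
move=> R_b011 S_sep; exists (f z0) => x; apply: (S_sep _ _ (f z1)).
by apply: AP_consistent ap _ _ _ _ _ => i; rewrite !tnth_mktuple.
Qed.

Lemma AP_Cst_abba :
  (forall a b, (a, b, b, a) \in R) ->
  (forall a b, consistent S a b b a -> consistent S b a a b -> a = b) ->
  Cst f.
Proof.
move=> R_abba S_sep; exists (f z0) => x; apply: S_sep;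
  by apply: AP_consistent ap _ _ _ _ _ => i; rewrite tnth_mktuple.
Qed.

End ConstantFromColumns.

Theorem mainTheorem16 (R S : rel4) :
  (R, S) = (R1, R4) \/ (R, S) = (R1, R5) \/ (R, S) = (R2, R4) \/
  (R, S) = (R2, R5) \/ (R, S) = (R3, R5) \/ (R, S) = (R5, R2) \/
  (R, S) = (R5, R3) ->
  forall (n : nat) (f : boolfun n), AP R S f <-> Cst f.
Proof.
move=> RS n f; split; last first.
  by apply: Cst_AP; case: RS => [[_ ->]|[[_ ->]|[[_ ->]|[[_ ->]|[[_ ->]|[[_ ->]|[_ ->]]]]]]].
case: RS => [[-> ->]|[[-> ->]|[[-> ->]|[[-> ->]|[[-> ->]|[[-> ->]|[-> ->]]]]]]] ap.
1-4: by apply: (AP_Cst_0b00 ap) => [[]|[] []].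
1: by apply: (AP_Cst_b011 ap) => [[]|[] [] []].
all: by apply: (AP_Cst_abba ap) => [[] []|[] []].
Qed.
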